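(* Let $\Omega=\{y\in\mathbb{R}^n: a_i^Ty\le b_i,\ i=1,\ldots,m\}$, let $x\in\Omega$ and $\alpha>0$, and suppose the nearly-active index set $I(x,\alpha)$ has $q\le n$ elements and $\{a_i:i\in I(x,\alpha)\}$ are linearly independent; label them so that $I(x,\alpha)=\{1,\ldots,q\}$ and let $A=[a_1\ \cdots\ a_q]\in\mathbb{R}^{n\times q}$. Let $u_1,\ldots,u_n$ be an orthonormal set of left singular vectors of $A$ with $u_1,\ldots,u_q$ spanning $\operatorname{col}(A)$. For $i=1,\ldots,q$ let $\hat d_i:=-(A^\dagger)^Te_i$, $d_i:=\frac{\alpha}{\|\hat d_i\|}\hat d_i$, and let $\alpha_i$ be the largest value in $[0,1]$ such that $x-\alpha_id_i\in\Omega$. Define $$\mathcal{D}=\{d_1,\ldots,d_q\}\cup\{-\alpha_1d_1,\ldots,-\alpha_qd_q\}\cup\{\pm\alpha u_{q+1},\ldots,\pm\alpha u_n\}.$$ Then $\mathcal{D}$ is a $\Lambda$-positive spanning set for $B(x,\alpha)\cap\Omega$ with $\Lambda=q\,\kappa(A)+\sqrt{n-q}$.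
   Context: Nearly-active constraints: $I(x,\alpha):=\{i\in\{1,\ldots,m\}: b_i-\alpha\|a_i\|\le a_i^Tx\}$ (constraints whose boundary hyperplane is within distance $\alpha$ of $x$). $A^\dagger=(A^TA)^{-1}A^T$ is the Moore–Penrose pseudoinverse, $\kappa(A)=\|A\|\,\|A^\dagger\|$ is the condition number (operator 2-norms), $e_i\in\mathbb{R}^q$ the coordinate vectors, $B(y,r)=\{z:\|z-y\|\le r\}$. Given $x\in\Omega$, $\alpha>0$, $\Lambda\ge0$, a set $\{d_1,\ldots,d_p\}$ is a $\Lambda$-positive spanning set for $B(x,\alpha)\cap\Omega$ if $x+d_i\in\Omega$ for all $i$ and, for every $v\in\mathbb{R}^n$ with $x+v\in\Omega$ and $\|v\|\le\alpha$, there exists $c\in\mathbb{R}^p$ with $c\ge0$, $v=\sum_ic_id_i$ and $\|c\|_1\le\Lambda$. *)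

From HB Require Import structures.
From mathcomp Require Import all_boot all_order all_algebra.
From mathcomp Require Import classical_sets reals.
Set Implicit Arguments. Unset Strict Implicit. Unset Printing Implicit Defensive.
Import Order.TTheory GRing.Theory Num.Theory.
Local Open Scope ring_scope.
Local Open Scope classical_set_scope.

Section Defs.
Context {R : realType}.

Definition dotv (n : nat) (u v : 'cV[R]_n) : R := \sum_(k < n) u k 0 * v k 0.
Definition vnorm (n : nat) (v : 'cV[R]_n) : R := Num.sqrt (dotv v v).

Definition opnorm (p r : nat) (M : 'M[R]_(p, r)) : R :=
  sup [set vnorm (M *m v) | v in [set v : 'cV[R]_r | vnorm v <= 1]].

(* Moore-Penrose pseudoinverse of a full-column-rank matrix: (A^T A)^{-1} A^T *)
Definition pinv (n q : nat) (A : 'M[R]_(n, q)) : 'M[R]_(q, n) :=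
  invmx (A^T *m A) *m A^T.

Definition kappa (n q : nat) (A : 'M[R]_(n, q)) : R := opnorm A * opnorm (pinv A).

Definition Omega (n m : nat) (a : 'I_m -> 'cV[R]_n) (b : 'I_m -> R) (y : 'cV[R]_n) : Prop :=
  forall i, dotv (a i) y <= b i.

Definition nearly_active (n m : nat) (a : 'I_m -> 'cV[R]_n) (b : 'I_m -> R)
  (x : 'cV[R]_n) (alpha : R) : {set 'I_m} :=
  [set i | b i - alpha * vnorm (a i) <= dotv (a i) x].

Definition evec (q : nat) (i : 'I_q) : 'cV[R]_q := \col_(k < q) (k == i)%:R.

Definition pos_spanning (n : nat) (Om : 'cV[R]_n -> Prop) (x : 'cV[R]_n) (alpha Lambda : R)
  (D : seq 'cV[R]_n) : Prop :=
  (forall d, d \in D -> Om (x + d)) /\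
  (forall v : 'cV[R]_n, Om (x + v) -> vnorm v <= alpha ->
     exists c : 'I_(size D) -> R,
       (forall k, 0 <= c k) /\
       v = \sum_(k < size D) c k *: nth 0 D k /\
       \sum_(k < size D) `|c k| <= Lambda).
End Defs.

From HB Require Import structures.
From mathcomp Require Import all_boot all_order all_algebra.
From mathcomp Require Import classical_sets reals.
From mathcomp Require Import ring lra.
Import Order.TTheory GRing.Theory Num.Theory.
Local Open Scope ring_scope.
Set Implicit Arguments. Unset Strict Implicit.

(* Within distance alpha of x only the nearly-active constraints can be violated,
   and the directions d_i satisfy a_j^T d_i = 0 for j <> i and a_i^T d_i < 0, while
   the u_j (j > q) are orthogonal to every a_i.  A feasible step v with |v| <= alpha
   splits orthogonally as v = P^T A^T v + w, P = pinv A, w in span(u_j, j > q).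
   The first part is sum_i g_i d_i with g_i = - a_i^T v |dhat_i| / alpha, so
   |g_i| <= |A| |P| = kappa(A).  When g_i < 0 it is realised with -alph_i d_i:
   feasibility of x + v makes x - min(1, -g_i) d_i feasible, so
   alph_i >= min(1, -g_i) and -g_i / alph_i <= max(1, -g_i) <= kappa(A).
   The second part costs sum_(j > q) |u_j^T v| / alpha <= sqrt(n - q) by
   Cauchy-Schwarz. *)

Section EuclideanSpace.
Variables (R : realType) (n : nat).
Implicit Types (u v w : 'cV[R]_n).

Lemma dotvE u v : dotv u v = (u^T *m v) 0 0.
Proof. by rewrite /dotv mxE; apply: eq_bigr => k _; rewrite mxE. Qed.

Lemma dotvC u v : dotv u v = dotv v u.
Proof. by apply: eq_bigr => k _; rewrite mulrC. Qed.

Lemma dotvDr u v w : dotv u (v + w) = dotv u v + dotv u w.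
Proof. by rewrite !dotvE mulmxDr mxE. Qed.

Lemma dotvZr c u v : dotv u (c *: v) = c * dotv u v.
Proof. by rewrite !dotvE -scalemxAr mxE. Qed.

Lemma dotvNr u v : dotv u (- v) = - dotv u v.
Proof. by rewrite -scaleN1r dotvZr mulN1r. Qed.

Lemma dotv0r u : dotv u 0 = 0.
Proof. by rewrite dotvE mulmx0 mxE. Qed.

Lemma dotv_sumr (I : Type) (r : seq I) (P : pred I) (F : I -> 'cV[R]_n) u :
  dotv u (\sum_(i <- r | P i) F i) = \sum_(i <- r | P i) dotv u (F i).
Proof. by rewrite dotvE mulmx_sumr summxE; apply: eq_bigr => i _; rewrite dotvE. Qed.

Lemma dotvv_ge0 u : 0 <= dotv u u.
Proof. by apply: sumr_ge0 => k _; rewrite -expr2 sqr_ge0. Qed.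

Lemma dotvv_eq0 u : dotv u u = 0 -> u = 0.
Proof.
move=> /eqP; rewrite psumr_eq0 => [/allP uu0|k _]; last by rewrite -expr2 sqr_ge0.
apply/matrixP => k j; rewrite (ord1 j) mxE.
by move: (uu0 k (mem_index_enum k)); rewrite -expr2 sqrf_eq0 => /eqP.
Qed.

Lemma vnorm_ge0 u : 0 <= vnorm u.
Proof. exact: sqrtr_ge0. Qed.

Lemma vnorm_sqr u : vnorm u ^+ 2 = dotv u u.
Proof. by rewrite sqr_sqrtr // dotvv_ge0. Qed.

Lemma vnorm_eq0 u : vnorm u = 0 -> u = 0.
Proof. by move=> u0; apply: dotvv_eq0; rewrite -vnorm_sqr u0 expr0n. Qed.

Lemma vnormZ c u : vnorm (c *: u) = `|c| * vnorm u.
Proof.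
rewrite /vnorm dotvZr dotvC dotvZr mulrA -expr2 sqrtrM ?sqr_ge0 //.
by rewrite sqrtr_sqr.
Qed.

Lemma vnormN u : vnorm (- u) = vnorm u.
Proof. by rewrite -scaleN1r vnormZ normrN1 mul1r. Qed.

Lemma normr_dotv_le u v : `|dotv u v| <= vnorm u * vnorm v.
Proof.
have [v0|vn0] := eqVneq (dotv v v) 0.
  by rewrite (dotvv_eq0 v0) dotv0r normr0 mulr_ge0 ?vnorm_ge0.
have vv_gt0 : 0 < dotv v v by rewrite lt_def vn0 dotvv_ge0.
rewrite -ler_sqr ?nnegrE ?mulr_ge0 ?vnorm_ge0 // exprMn !vnorm_sqr real_normK ?num_real //.
(* 0 <= |(v.v) u - (u.v) v|^2 = (v.v) ((u.u) (v.v) - (u.v)^2) *)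
have := dotvv_ge0 (dotv v v *: u - dotv u v *: v).
rewrite dotvDr !dotvNr !dotvZr ![dotv (_ - _) _]dotvC !dotvDr !dotvNr !dotvZr (dotvC v u).
move=> res_ge0; rewrite -subr_ge0 -(pmulr_rge0 _ vv_gt0).
by move: res_ge0; congr (0 <= _); ring.
Qed.

Lemma dotv_evec (i : 'I_n) v : dotv (evec i) v = v i 0.
Proof.
rewrite /dotv (bigD1 i) //= big1 ?addr0 => [|k /negbTE ki]; rewrite mxE ?ki ?eqxx.
  by rewrite mul1r.
by rewrite mul0r.
Qed.

Lemma vnorm_evec (i : 'I_n) : vnorm (evec i) = 1 :> R.
Proof. by rewrite /vnorm dotv_evec mxE eqxx sqrtr1. Qed.

Lemma coord_le_vnorm (i : 'I_n) v : `|v i 0| <= vnorm v.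
Proof. by rewrite -dotv_evec (le_trans (normr_dotv_le _ _)) // vnorm_evec mul1r. Qed.

End EuclideanSpace.

Section OperatorNorm.
Variables (R : realType) (p r : nat) (M : 'M[R]_(p, r)).

Lemma dotv_col j (w : 'cV[R]_p) : dotv (col j M) w = (M^T *m w) j 0.
Proof. by rewrite mxE; apply: eq_bigr => k _; rewrite !mxE. Qed.

Lemma mulmx_sum_col (y : 'cV[R]_r) : M *m y = \sum_j y j 0 *: col j M.
Proof.
apply/matrixP => k l; rewrite (ord1 l) mxE summxE; apply: eq_bigr => j _.
by rewrite !mxE mulrC.
Qed.

Lemma opnorm_has_sup :
  has_sup [set vnorm (M *m v) | v in [set v : 'cV[R]_r | vnorm v <= 1]].
Proof.
split; first by exists (vnorm (M *m 0)), 0; rewrite //= /vnorm dotv0r sqrtr0.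
exists (Num.sqrt (\sum_k (\sum_j `|M k j|) ^+ 2)) => _ [u /= u_le1 <-].
rewrite ler_sqrt; last by apply: sumr_ge0 => k _; rewrite sqr_ge0.
apply: ler_sum => k _; rewrite -expr2 -real_normK ?num_real //.
rewrite lerXn2r ?nnegrE ?sumr_ge0 // mxE (le_trans (ler_norm_sum _ _ _)) //.
apply: ler_sum => j _; rewrite normrM ler_piMr //.
exact: le_trans (coord_le_vnorm _ _) u_le1.
Qed.

Lemma vnorm_mulmx_le v : vnorm (M *m v) <= opnorm M * vnorm v.
Proof.
have [v0|vn0] := eqVneq (vnorm v) 0.
  by rewrite v0 (vnorm_eq0 v0) mulmx0 mulr0 /vnorm dotv0r sqrtr0.
have v_gt0 : 0 < vnorm v by rewrite lt_def vn0 vnorm_ge0.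
have : vnorm (M *m ((vnorm v)^-1 *: v)) <= opnorm M.
  apply: (sup_upper_bound opnorm_has_sup); exists ((vnorm v)^-1 *: v) => //=.
  by rewrite vnormZ ger0_norm ?invr_ge0 ?vnorm_ge0 // mulVf.
by rewrite -scalemxAr vnormZ ger0_norm ?invr_ge0 ?vnorm_ge0 // ler_pdivrMl // mulrC.
Qed.

Lemma opnorm_ge0 : 0 <= opnorm M.
Proof.
apply: le_trans (sup_upper_bound opnorm_has_sup _) => /=; last first.
  by exists 0; rewrite //= /vnorm dotv0r sqrtr0.
exact: vnorm_ge0.
Qed.

Lemma mulmx_evec j : M *m evec j = col j M.
Proof.
apply/matrixP => k l; rewrite !mxE (bigD1 j) //= big1 ?addr0 => [|i /negbTE ij].
  by rewrite mxE eqxx mulr1.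
by rewrite mxE ij mulr0.
Qed.

Lemma vnorm_col_le_opnorm j : vnorm (col j M) <= opnorm M.
Proof.
by rewrite -mulmx_evec (le_trans (vnorm_mulmx_le _)) // vnorm_evec mulr1.
Qed.

Lemma vnorm_row_le_opnorm i : vnorm (row i M)^T <= opnorm M.
Proof.
set y := (row i M)^T.
have [y0|yn0] := eqVneq (vnorm y) 0; first by rewrite y0 opnorm_ge0.
have y_gt0 : 0 < vnorm y by rewrite lt_def yn0 vnorm_ge0.
have yy : vnorm y ^+ 2 = (M *m y) i 0.
  by rewrite vnorm_sqr mxE; apply: eq_bigr => k _; rewrite !mxE.
rewrite -(ler_pM2r y_gt0) -expr2 yy.
exact: le_trans (ler_norm _) (le_trans (coord_le_vnorm _ _) (vnorm_mulmx_le _)).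
Qed.

End OperatorNorm.

Section PseudoInverse.
Variables (R : realType) (n q : nat) (A : 'M[R]_(n, q)).
Hypothesis A_free : row_free A^T.

Lemma gram_unitmx : A^T *m A \in unitmx.
Proof.
rewrite -row_free_unit; apply: inj_row_free => r rAA0.
apply: (row_free_inj A_free); rewrite mul0mx; apply: trmx_inj; rewrite trmx0.
apply: dotvv_eq0; rewrite dotvE trmxK trmx_mul trmxK mulmxA -(mulmxA r) rAA0.
by rewrite mul0mx mxE.
Qed.

Lemma pinv_mulmx : pinv A *m A = 1%:M.
Proof. by rewrite /pinv -mulmxA mulVmx // gram_unitmx. Qed.

Lemma trmx_pinv_mulmx : A^T *m (pinv A)^T = 1%:M.
Proof. by rewrite -trmx_mul pinv_mulmx trmx1. Qed.

Lemma trmx_pinv_proj : (pinv A)^T *m A^T *m A = A.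
Proof.
rewrite -mulmxA /pinv trmx_mul trmxK trmx_inv trmx_mul trmxK -mulmxA.
by rewrite mulVmx ?mulmx1 // gram_unitmx.
Qed.

End PseudoInverse.

Section OrthogonalMatrix.
Variables (R : realType) (n : nat) (U : 'M[R]_n).
Hypothesis U_orth : U^T *m U = 1%:M.

Lemma dotv_cols_orth j k : dotv (col j U) (col k U) = (j == k)%:R.
Proof. by rewrite dotv_col -mulmx_evec mulmxA U_orth mul1mx mxE. Qed.

Lemma vnorm_col_orth j : vnorm (col j U) = 1.
Proof. by rewrite /vnorm dotv_cols_orth eqxx /= sqrtr1. Qed.

Lemma orth_expansion (v : 'cV[R]_n) : v = \sum_j dotv (col j U) v *: col j U.
Proof.
rewrite -{1}[v]mul1mx -(mulmx1C U_orth) -mulmxA mulmx_sum_col.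
by apply: eq_bigr => j _; rewrite dotv_col.
Qed.

Lemma orth_span_perp (P : pred 'I_n) (c : 'I_n -> R) k : ~~ P k ->
  dotv (col k U) (\sum_(j | P j) c j *: col j U) = 0.
Proof.
move=> Pk; rewrite dotv_sumr big1 // => j Pj.
have /negbTE kj : k != j by apply: contraNneq Pk => ->.
by rewrite dotvZr dotv_cols_orth kj mulr0.
Qed.

Lemma orth_parseval (v : 'cV[R]_n) : \sum_j dotv (col j U) v ^+ 2 = vnorm v ^+ 2.
Proof.
rewrite vnorm_sqr; transitivity (dotv (U^T *m v) (U^T *m v)).
  by apply: eq_bigr => j _; rewrite expr2 dotv_col.
by rewrite !dotvE trmx_mul trmxK mulmxA -(mulmxA v^T) (mulmx1C U_orth) mulmx1.
Qed.

Lemma orth_sum_abs_coord_le (P : pred 'I_n) (v : 'cV[R]_n) :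
  \sum_(j | P j) `|dotv (col j U) v| <= Num.sqrt #|P|%:R * vnorm v.
Proof.
pose e : 'cV[R]_n := \col_j (P j)%:R.
pose t : 'cV[R]_n := \col_j `|dotv (col j U) v|.
have -> : \sum_(j | P j) `|dotv (col j U) v| = dotv e t.
  by rewrite big_mkcond; apply: eq_bigr => j _; rewrite !mxE; case: (P j); rewrite ?mul1r ?mul0r.
have -> : Num.sqrt #|P|%:R = vnorm e.
  rewrite /vnorm -sum1_card natr_sum big_mkcond; apply: congr1; apply: eq_bigr => j _.
  by rewrite !mxE unfold_in; case: (P j); rewrite ?mulr1 ?mulr0.
have -> : vnorm v = vnorm t.
  rewrite /vnorm -vnorm_sqr -orth_parseval; apply: congr1; apply: eq_bigr => j _.
  by rewrite !mxE -expr2 real_normK ?num_real.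
exact: le_trans (ler_norm _) (normr_dotv_le _ _).
Qed.

End OrthogonalMatrix.

Section NonnegativeCombination.
Variables (R : realType) (n : nat).
Implicit Types (D : seq 'cV[R]_n) (v y : 'cV[R]_n) (L : R).

Definition nonneg_comb D v L : Prop :=
  exists2 c : nat -> R, (forall k, 0 <= c k) &
    v = \sum_(k < size D) c k *: D`_k /\ \sum_(k < size D) c k <= L.

Lemma nonneg_comb_le D v L L' : nonneg_comb D v L -> L <= L' -> nonneg_comb D v L'.
Proof. by move=> [c c_ge0 [-> cL]] LL'; exists c => //; split=> //; apply: le_trans LL'. Qed.

Lemma nonneg_comb0 : nonneg_comb [::] 0 0.
Proof. by exists (fun=> 0); rewrite //= !big_ord0. Qed.

Lemma nonneg_comb1 y c : 0 <= c -> nonneg_comb [:: y] (c *: y) c.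
Proof. by move=> c_ge0; exists (fun=> c); rewrite //= !big_ord1. Qed.

Lemma nonneg_comb_cat D1 D2 v1 v2 L1 L2 :
  nonneg_comb D1 v1 L1 -> nonneg_comb D2 v2 L2 ->
  nonneg_comb (D1 ++ D2) (v1 + v2) (L1 + L2).
Proof.
move=> [c1 c1_ge0 [-> c1L]] [c2 c2_ge0 [-> c2L]].
pose c k := if (k < size D1)%N then c1 k else c2 (k - size D1)%N.
have cl (k : 'I_(size D1)) : c k = c1 k /\ (D1 ++ D2)`_k = D1`_k.
  by rewrite /c nth_cat ltn_ord.
have cr (k : 'I_(size D2)) : c (size D1 + k)%N = c2 k /\ (D1 ++ D2)`_(size D1 + k) = D2`_k.
  by rewrite /c nth_cat ltnNge leq_addr /= addKn.
exists c => [k|]; first by rewrite /c; case: ifP.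
rewrite size_cat !big_split_ord /=; split.
  by congr (_ + _); apply: eq_bigr => k _; [case: (cl k) | case: (cr k)] => -> ->.
by apply: lerD; [under eq_bigr do rewrite (cl _).1 | under eq_bigr do rewrite (cr _).1].
Qed.

Lemma nonneg_comb_map (T : Type) (s : seq T) (f : T -> 'cV[R]_n) (h : T -> R) :
  (forall t, 0 <= h t) ->
  nonneg_comb (map f s) (\sum_(t <- s) h t *: f t) (\sum_(t <- s) h t).
Proof.
move=> h_ge0; elim: s => [|t s IHs]; first by rewrite !big_nil; exact: nonneg_comb0.
by rewrite !big_cons; exact: (nonneg_comb_cat (nonneg_comb1 (f t) (h_ge0 t)) IHs).
Qed.

Lemma nonneg_comb_signed (T : Type) (s : seq T) (f f' : T -> 'cV[R]_n) (beta g : T -> R) :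
  (forall t, f' t = - (beta t *: f t)) -> (forall t, g t < 0 -> 0 < beta t) ->
  nonneg_comb (map f s ++ map f' s) (\sum_(t <- s) g t *: f t)
    (\sum_(t <- s) (if 0 <= g t then g t else - g t / beta t)).
Proof.
move=> f'E beta_gt0.
pose gp t := if 0 <= g t then g t else 0.
pose gn t := if 0 <= g t then 0 else - g t / beta t.
have gp_ge0 t : 0 <= gp t by rewrite /gp; case: ifP.
have gn_ge0 t : 0 <= gn t.
  rewrite /gn; case: ifPn => //; rewrite -ltNge => g_lt0.
  by rewrite divr_ge0 ?oppr_ge0 ?ltW ?beta_gt0.
have := nonneg_comb_cat (nonneg_comb_map s f gp_ge0) (nonneg_comb_map s f' gn_ge0).
rewrite -!big_split /=; congr nonneg_comb; apply: eq_bigr => t _; rewrite /gp /gn.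
  rewrite f'E; case: ifPn => [_|]; first by rewrite scale0r addr0.
  rewrite -ltNge => g_lt0; rewrite scale0r add0r scalerN scalerA divfK ?scaleNr ?opprK //.
  by rewrite gt_eqF ?beta_gt0.
by case: ifP; rewrite ?addr0 ?add0r.
Qed.

Lemma nonneg_comb_pm (T : Type) (s : seq T) (f : T -> 'cV[R]_n) (g : T -> R) :
  nonneg_comb (map f s ++ map (fun t => - f t) s) (\sum_(t <- s) g t *: f t)
    (\sum_(t <- s) `|g t|).
Proof.
have := nonneg_comb_signed s (f' := fun t => - f t) (beta := fun=> 1) (g := g)
  (fun t => congr1 -%R (esym (scale1r _))) (fun _ _ => ltr01).
congr nonneg_comb; apply: eq_bigr => t _; rewrite divr1.
by case: ifPn => [/ger0_norm|]; rewrite // -ltNge => /ltr0_norm.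
Qed.

End NonnegativeCombination.

Lemma pos_spanningP (R : realType) (n : nat) (Om : 'cV[R]_n -> Prop) x alpha L D :
  (forall y, y \in D -> Om (x + y)) ->
  (forall v, Om (x + v) -> vnorm v <= alpha -> nonneg_comb D v L) ->
  pos_spanning Om x alpha L D.
Proof.
move=> D_feas D_comb; split=> // v Omv v_le; have [c c_ge0 [-> cL]] := D_comb v Omv v_le.
by exists (fun k => c k); split=> //; split=> //; under eq_bigr do rewrite ger0_norm //.
Qed.

Lemma card_ord_ge (q n : nat) : #|[pred j : 'I_n | (q <= j)%N]| = (n - q)%N.
Proof.
by rewrite -sum1_card -[RHS]muln1 -sum_nat_const_nat big_geq_mkord; apply: eq_bigl => j.
Qed.

Lemma Omega_nearly_active (R : realType) (n m : nat) (a : 'I_m -> 'cV[R]_n) b x alpha y :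
  vnorm y <= alpha ->
  (forall i, i \in nearly_active a b x alpha -> dotv (a i) (x + y) <= b i) ->
  Omega a b (x + y).
Proof.
move=> y_le active_ok i; have [/active_ok //|] := boolP (i \in nearly_active a b x alpha).
rewrite inE -ltNge dotvDr => far.
have : dotv (a i) y <= alpha * vnorm (a i).
  apply: le_trans (ler_norm _) (le_trans (normr_dotv_le _ _) _).
  by rewrite mulrC ler_wpM2r ?vnorm_ge0.
by move: far; lra.
Qed.

Section PositiveSpanningSet.
Variables (R : realType) (n m q : nat) (a : 'I_m -> 'cV[R]_n) (b : 'I_m -> R).
Variables (x : 'cV[R]_n) (alpha : R) (sigma : 'I_q -> 'I_m) (U : 'M[R]_n) (alph : 'I_q -> R).

Local Notation A := (\matrix_(k < n, j < q) a (sigma j) k 0).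
Local Notation dhat i := (- ((pinv A)^T *m evec i)).
Local Notation d i := ((alpha / vnorm (dhat i)) *: dhat i).
Local Notation J := [seq j <- enum 'I_n | (q <= nat_of_ord j)%N].
Local Notation D := ([seq d i | i <- enum 'I_q] ++ [seq - (alph i *: d i) | i <- enum 'I_q] ++
    [seq alpha *: col j U | j <- J] ++ [seq - (alpha *: col j U) | j <- J]).

Hypotheses (x_in : Omega a b x) (alpha_gt0 : 0 < alpha).
Hypothesis active_sigma : forall i, i \in nearly_active a b x alpha -> exists j, sigma j = i.
Hypotheses (A_free : row_free A^T) (U_orth : U^T *m U = 1%:M).
Hypothesis colA_span : forall v : 'cV[R]_n, (exists c : 'cV[R]_q, v = A *m c) <->
  exists c : 'I_n -> R, v = \sum_(j < n | (j < q)%N) c j *: col j U.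
Hypothesis alph_max : forall i, 0 <= alph i <= 1 /\ Omega a b (x - alph i *: d i) /\
  (forall t, 0 <= t <= 1 -> Omega a b (x - t *: d i) -> t <= alph i).

Lemma col_A (j : 'I_q) : col j A = a (sigma j).
Proof. by apply/matrixP => k l; rewrite (ord1 l) !mxE. Qed.

Lemma dotv_a (j : 'I_q) (w : 'cV[R]_n) : dotv (a (sigma j)) w = (A^T *m w) j 0.
Proof. by rewrite -col_A dotv_col. Qed.

Lemma dotv_a_dhat (i j : 'I_q) : dotv (a (sigma j)) (dhat i) = - (j == i)%:R.
Proof. by rewrite dotv_a mulmxN mulmxA trmx_pinv_mulmx // mul1mx !mxE. Qed.

Lemma vnorm_dhat_gt0 (i : 'I_q) : 0 < vnorm (dhat i).
Proof.
rewrite lt_def vnorm_ge0 andbT; apply/eqP => /vnorm_eq0 dhat0.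
by have /eqP := dotv_a_dhat i i; rewrite dhat0 dotv0r eqxx eq_sym oppr_eq0 oner_eq0.
Qed.

Lemma vnorm_d (i : 'I_q) : vnorm (d i) = alpha.
Proof.
rewrite vnormZ ger0_norm ?divr_ge0 ?vnorm_ge0 ?ltW // divfK //.
by rewrite gt_eqF ?vnorm_dhat_gt0.
Qed.

Lemma dotv_a_d (i j : 'I_q) : dotv (a (sigma j)) (d i) = - (alpha / vnorm (dhat i)) * (j == i)%:R.
Proof. by rewrite dotvZr dotv_a_dhat mulrN mulNr. Qed.

Lemma dotv_a_perp (j : 'I_q) (k : 'I_n) : (q <= k)%N -> dotv (a (sigma j)) (col k U) = 0.
Proof.
move=> qk; have [c ->] : exists c, a (sigma j) = \sum_(l < n | (l < q)%N) c l *: col l U.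
  by apply/colA_span; exists (evec j); rewrite mulmx_evec col_A.
by rewrite dotvC (orth_span_perp U_orth) // -leqNgt.
Qed.

Lemma vnorm_a_dhat_le_kappa (i : 'I_q) : vnorm (a (sigma i)) * vnorm (dhat i) <= kappa A.
Proof.
rewrite -col_A vnormN mulmx_evec -tr_row.
by rewrite ler_pM ?vnorm_ge0 ?vnorm_col_le_opnorm ?vnorm_row_le_opnorm.
Qed.

Lemma kappa_ge1 (i : 'I_q) : 1 <= kappa A.
Proof.
apply: le_trans (vnorm_a_dhat_le_kappa i); apply: le_trans (normr_dotv_le _ _).
by rewrite dotv_a_dhat eqxx normrN normr1.
Qed.

Lemma Omega_step (y : 'cV[R]_n) : vnorm y <= alpha ->
  (forall j, dotv (a (sigma j)) (x + y) <= b (sigma j)) -> Omega a b (x + y).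
Proof.
move=> y_le sigma_ok; apply: Omega_nearly_active y_le _ => i /active_sigma [j <-].
exact: sigma_ok.
Qed.

Lemma Omega_descent (y : 'cV[R]_n) : vnorm y <= alpha ->
  (forall j, dotv (a (sigma j)) y <= 0) -> Omega a b (x + y).
Proof.
move=> y_le y_desc; apply: Omega_step y_le _ => j.
by rewrite dotvDr; have := x_in (sigma j); have := y_desc j; lra.
Qed.

Lemma D_feasible (y : 'cV[R]_n) : y \in D -> Omega a b (x + y).
Proof.
have u_le j : vnorm (alpha *: col j U) <= alpha.
  by rewrite vnormZ (vnorm_col_orth U_orth) mulr1 ger0_norm // ltW.
rewrite !mem_cat => /or4P[] /mapP[i i_in ->].
- apply: Omega_descent => [|j]; first by rewrite vnorm_d.
  by rewrite dotv_a_d mulNr oppr_le0 mulr_ge0 ?ler0n // divr_ge0 ?vnorm_ge0 // ltW.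
- exact: (alph_max i).2.1.
- move: i_in; rewrite mem_filter => /andP[qi _].
  by apply: Omega_descent => // j; rewrite dotvZr dotv_a_perp ?mulr0.
- move: i_in; rewrite mem_filter => /andP[qi _].
  apply: Omega_descent => [|j]; first by rewrite vnormN.
  by rewrite dotvNr dotvZr dotv_a_perp ?mulr0 ?oppr0.
Qed.

Variable v : 'cV[R]_n.
Hypotheses (xv_in : Omega a b (x + v)) (v_le : vnorm v <= alpha).

Let coef i := - dotv (a (sigma i)) v * vnorm (dhat i) / alpha.

Lemma coef_scale i : coef i * (alpha / vnorm (dhat i)) = - dotv (a (sigma i)) v.
Proof. by rewrite /coef mulrA divfK ?mulfK // gt_eqF ?vnorm_dhat_gt0. Qed.

Lemma coef_d_decomposition : v = \sum_(i <- enum 'I_q) coef i *: d i +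
  \sum_(j <- J) (dotv (col j U) v / alpha) *: (alpha *: col j U).
Proof.
set w := \sum_(j < n | (q <= j)%N) dotv (col j U) v *: col j U.
have -> : \sum_(j <- J) (dotv (col j U) v / alpha) *: (alpha *: col j U) = w.
  rewrite big_filter big_enum_cond /=; apply: eq_bigr => j _.
  by rewrite scalerA divfK // gt_eqF.
have vw : v - w = \sum_(j < n | (j < q)%N) dotv (col j U) v *: col j U.
  rewrite {1}(orth_expansion U_orth v) (bigID (fun j : 'I_n => (q <= j)%N)) /=.
  by rewrite -/w addrAC subrr add0r; apply: eq_bigl => j; rewrite -ltnNge.
have [c vwA] := (colA_span (v - w)).2 (ex_intro _ _ vw).
have Aw : A^T *m w = 0.
  apply/matrixP => j l; rewrite (ord1 l) -dotv_a dotv_sumr big1 ?mxE // => k qk.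
  by rewrite dotvZr dotv_a_perp ?mulr0.
have ATv : A^T *m v = A^T *m (A *m c) by rewrite -vwA mulmxBr Aw subr0.
have Ac : A *m c = (pinv A)^T *m (A^T *m v).
  by rewrite ATv !mulmxA (trmx_pinv_proj A_free).
rewrite -{1}(subrK w v) vwA Ac; congr (_ + _).
rewrite mulmx_sum_col big_enum /=; apply: eq_bigr => i _.
by rewrite -[col i _]mulmx_evec scalerA coef_scale scaleNr scalerN opprK dotv_a.
Qed.

Lemma coef_abs_le_kappa i : `|coef i| <= kappa A.
Proof.
have -> : `|coef i| = `|dotv (a (sigma i)) v| * vnorm (dhat i) / alpha.
  by rewrite /coef !normrM normrN normfV (ger0_norm (vnorm_ge0 _)) (gtr0_norm alpha_gt0).
rewrite ler_pdivrMr //; apply: le_trans (ler_wpM2r (vnorm_ge0 _) (normr_dotv_le _ _)) _.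
by rewrite mulrAC ler_pM ?mulr_ge0 ?vnorm_ge0 ?vnorm_a_dhat_le_kappa.
Qed.

Lemma alph_ge_min i : coef i < 0 -> Num.min 1 (- coef i) <= alph i.
Proof.
move=> coef_lt0; set t := Num.min 1 (- coef i).
have t_ge0 : 0 <= t by rewrite le_min ler01 oppr_ge0 ltW.
have t_le : t <= - coef i by rewrite ge_min lexx orbT.
apply: (alph_max i).2.2; first by rewrite t_ge0 ge_min lexx.
apply: Omega_step => [|j].
  by rewrite vnormN vnormZ vnorm_d ger0_norm // ler_piMl ?(ltW alpha_gt0) // /t ge_min lexx.
rewrite dotvDr dotvNr dotvZr dotv_a_d.
case: eqP => [->|_]; last by rewrite !mulr0 oppr0 addr0 x_in.
set r := alpha / vnorm (dhat i).
have r_ge0 : 0 <= r by rewrite divr_ge0 ?vnorm_ge0 ?ltW.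
have av : - coef i * r = dotv (a (sigma i)) v by rewrite mulNr coef_scale opprK.
have := xv_in (sigma i); have := ler_wpM2r r_ge0 t_le; rewrite dotvDr -av /= mulr1.
lra.
Qed.

Lemma coef_cost_le i : (if 0 <= coef i then coef i else - coef i / alph i) <= kappa A.
Proof.
have := coef_abs_le_kappa i; case: ifPn => [coef_ge0|]; first by rewrite ger0_norm.
rewrite -ltNge => coef_lt0; rewrite ltr0_norm // => coef_le.
have alph_ge := alph_ge_min coef_lt0; have kappa_ge := kappa_ge1 i.
have alph_gt0 : 0 < alph i by apply: lt_le_trans alph_ge; rewrite lt_min ltr01 oppr_gt0.
rewrite ler_pdivrMr //; have [one_le|lt_one] := lerP 1 (- coef i).
  rewrite (min_l one_le) in alph_ge; apply: le_trans coef_le _.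
  by rewrite -{1}[kappa A]mulr1 ler_wpM2l // (le_trans ler01 kappa_ge).
rewrite (min_r (ltW lt_one)) in alph_ge; apply: le_trans alph_ge _.
by rewrite -{1}[alph i]mul1r ler_wpM2r // ltW.
Qed.

Lemma u_cost_le : \sum_(j <- J) `|dotv (col j U) v / alpha| <= Num.sqrt (n - q)%:R.
Proof.
under eq_bigr do rewrite normrM normfV (gtr0_norm alpha_gt0).
rewrite -mulr_suml big_filter big_enum_cond ler_pdivrMr //.
apply: le_trans (orth_sum_abs_coord_le U_orth [pred j : 'I_n | (q <= j)%N] v) _.
by rewrite card_ord_ge ler_wpM2l ?sqrtr_ge0.
Qed.

Lemma D_nonneg_comb : nonneg_comb D v (q%:R * kappa A + Num.sqrt (n - q)%:R).
Proof.
have alph_gt0 i : coef i < 0 -> 0 < alph i.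
  by move=> coef_lt0; apply: lt_le_trans (alph_ge_min coef_lt0); rewrite lt_min ltr01 oppr_gt0.
have := nonneg_comb_cat
  (nonneg_comb_signed (enum 'I_q) (f := fun i => d i) (fun=> erefl) alph_gt0)
  (nonneg_comb_pm J (fun j => alpha *: col j U) (fun j => dotv (col j U) v / alpha)).
rewrite -coef_d_decomposition -catA => /nonneg_comb_le; apply; apply: lerD; last exact: u_cost_le.
rewrite big_enum /=; apply: le_trans (ler_sum _ (fun i _ => coef_cost_le i)) _.
by rewrite sumr_const card_ord mulr_natl.
Qed.

End PositiveSpanningSet.

Theorem theorem5p8 (R : realType) (n m q : nat)
  (a : 'I_m -> 'cV[R]_n) (b : 'I_m -> R) (x : 'cV[R]_n) (alpha : R)
  (sigma : 'I_q -> 'I_m)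
  (U : 'M[R]_n) (V : 'M[R]_q) (s : 'I_q -> R)
  (alph : 'I_q -> R) :
  Omega a b x -> 0 < alpha ->
  (* I(x,alpha) = {sigma 1, ..., sigma q}, listed without repetition (so |I| = q) *)
  injective sigma ->
  (forall i, i \in nearly_active a b x alpha <-> exists j, sigma j = i) ->
  (q <= n)%N ->
  let A : 'M[R]_(n, q) := \matrix_(k < n, j < q) a (sigma j) k 0 in
  (* the a_i, i in I(x,alpha), are linearly independent *)
  row_free A^T ->
  (* U = [u_1 ... u_n] orthonormal left singular vectors: A = U S V^T is an SVD *)
  U^T *m U = 1%:M -> V^T *m V = 1%:M -> (forall j, 0 <= s j) ->
  A = U *m (\matrix_(i < n, j < q) (if (i : nat) == j then s j else 0)) *m V^T ->
  (* u_1, ..., u_q span col(A) *)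
  (forall v : 'cV[R]_n, (exists c : 'cV[R]_q, v = A *m c) <->
     exists c : 'I_n -> R, v = \sum_(j < n | (j < q)%N) c j *: col j U) ->
  let dhat (i : 'I_q) : 'cV[R]_n := - ((pinv A)^T *m evec i) in
  let d (i : 'I_q) : 'cV[R]_n := (alpha / vnorm (dhat i)) *: dhat i in
  (* alph i = largest value in [0,1] with x - alph i d_i in Omega *)
  (forall i, 0 <= alph i <= 1 /\ Omega a b (x - alph i *: d i) /\
     (forall t, 0 <= t <= 1 -> Omega a b (x - t *: d i) -> t <= alph i)) ->
  let D : seq 'cV[R]_n :=
    [seq d i | i <- enum 'I_q] ++ [seq - (alph i *: d i) | i <- enum 'I_q] ++
    [seq alpha *: col j U | j <- [seq j <- enum 'I_n | (q <= nat_of_ord j)%N]] ++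
    [seq - (alpha *: col j U) | j <- [seq j <- enum 'I_n | (q <= nat_of_ord j)%N]] in
  pos_spanning (Omega a b) x alpha (q%:R * kappa A + Num.sqrt (n - q)%:R) D.
Proof.
move=> x_in alpha_gt0 _ active _ A A_free U_orth _ _ _ colA_span dhat d alph_max D.
have active_sigma i := (active i).1.
apply: pos_spanningP => [y|v xv_in v_le].
  exact: D_feasible x_in alpha_gt0 active_sigma A_free U_orth colA_span alph_max y.
exact: D_nonneg_comb x_in alpha_gt0 active_sigma A_free U_orth colA_span alph_max v xv_in v_le.
Qed.
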